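(* Let $\psi:\mathsf F\Rightarrow\mathsf G$ be a morphism between constructible cosheaves with a common critical set $S=\{a_0<a_1<\dots<a_n\}$, and set $a_{-1}=-\infty$, $a_{n+1}=+\infty$. If $\psi_I$ is a bijection for every interval of the form $I=(a_{i-1},a_{i+1})$ ($0\le i\le n$) and $I=(a_i,a_{i+1})$ ($0\le i\le n-1$), then $\psi$ is an isomorphism of cosheaves (a natural isomorphism).
   Context: $\mathbf{Int}$ is the category whose objects are the open intervals of $\mathbb{R}$ (including unbounded ones and the empty set) and whose morphisms are inclusions. A pre-cosheaf is a functor $\mathsf F:\mathbf{Int}\to\mathbf{Set}$; $\mathsf F[I\subseteq J]$ denotes the image of an inclusion; morphisms are natural transformations. A cosheaf is a pre-cosheaf such that for every open interval $U$ and every family $(I_p)$ of open intervals with union $U$, $\mathsf F(U)$ with the maps $\mathsf F[I_p\subseteq U]$ is the colimit of $\coprod_{p,q}\mathsf F(I_p\cap I_q)\rightrightarrows\coprod_p\mathsf F(I_p)$ (arrows induced by the inclusions $I_p\cap I_q\subseteq I_p$, $I_p\cap I_q\subseteq I_q$). A (pre-)cosheaf is constructible if every $\mathsf F(I)$ is finite and there is a finite $S\subset\mathbb R$ such that $\mathsf F[I\subseteq J]$ is a bijection whenever $I\subseteq J$ and $I\cap S=J\cap S$, and $\mathsf F(I)=\emptyset$ whenever $I\subseteq(-\infty,\min S)$ or $I\subseteq(\max S,\infty)$. *)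

From Stdlib Require Import Reals Lra List Arith.
Open Scope R_scope.

(* Bounds of an open interval: None = -oo (lower) / +oo (upper). *)
Definition above (lb : option R) (x : R) : Prop :=
  match lb with None => True | Some a => a < x end.
Definition below (ub : option R) (x : R) : Prop :=
  match ub with None => True | Some b => x < b end.
Definition in_int (lb ub : option R) (x : R) : Prop := above lb x /\ below ub x.

(* Objects of Int: open intervals of R (including unbounded ones and the
   empty set), viewed as subsets of R. *)
Record Interval := mkInterval {
  iset : R -> Prop;
  iset_is_int : exists lb ub, forall x, iset x <-> in_int lb ub x }.

Definition intv (lb ub : option R) : Interval :=
  mkInterval (in_int lb ub) (ex_intro _ lb (ex_intro _ ub (fun x => iff_refl _))).

Definition subI (I J : Interval) : Prop := forall x, iset I x -> iset J x.

Definition lmax (l1 l2 : option R) : option R :=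
  match l1, l2 with
  | None, l => l | l, None => l | Some a, Some b => Some (Rmax a b) end.
Definition umin (u1 u2 : option R) : option R :=
  match u1, u2 with
  | None, u => u | u, None => u | Some a, Some b => Some (Rmin a b) end.

Lemma inter_is_int (I J : Interval) :
  exists lb ub, forall x, (iset I x /\ iset J x) <-> in_int lb ub x.
Proof.
  destruct I as [i [l1 [u1 Hi]]]; destruct J as [j [l2 [u2 Hj]]]; simpl.
  exists (lmax l1 l2), (umin u1 u2). intro x. rewrite Hi, Hj.
  unfold in_int, above, below.
  destruct l1 as [a1|], l2 as [a2|], u1 as [b1|], u2 as [b2|]; simpl;
  repeat match goal with
  | |- context [Rmax ?a ?b] => unfold Rmax; destruct (Rle_dec a b)
  | |- context [Rmin ?a ?b] => unfold Rmin; destruct (Rle_dec a b)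
  end; split; intuition lra.
Qed.

Definition inter (I J : Interval) : Interval :=
  mkInterval (fun x => iset I x /\ iset J x) (inter_is_int I J).

Lemma inter_subl I J : subI (inter I J) I.
Proof. intros x [H _]; exact H. Qed.
Lemma inter_subr I J : subI (inter I J) J.
Proof. intros x [_ H]; exact H. Qed.

Record precosheaf := {
  cobj :> Interval -> Type;
  cmap : forall I J : Interval, subI I J -> cobj I -> cobj J;
  cmap_id : forall I (h : subI I I) x, cmap I I h x = x;
  cmap_comp : forall I J K (h1 : subI I J) (h2 : subI J K) (h3 : subI I K) x,
      cmap J K h2 (cmap I J h1 x) = cmap I K h3 x }.

Record cmorph (F G : precosheaf) := {
  comp :> forall I, F I -> G I;
  comp_nat : forall I J (h : subI I J) x,
      comp J (cmap F I J h x) = cmap G I J h (comp I x) }.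

Definition bijective {A B : Type} (f : A -> B) : Prop :=
  exists g : B -> A, (forall x, g (f x) = x) /\ (forall y, f (g y) = y).

Definition finite_type (A : Type) : Prop := exists l : list A, forall x, In x l.

(* Cosheaf condition: for every cover (I_p) of U, F(U) with the maps
   F[I_p ⊆ U] is the colimit (coequalizer) of
   ∐ F(I_p ∩ I_q) ⇉ ∐ F(I_p). *)
Definition is_cosheaf (F : precosheaf) : Prop :=
  forall (U : Interval) (P : Type) (Ip : P -> Interval)
         (hcov : forall x, iset U x <-> exists p, iset (Ip p) x)
         (hsub : forall p, subI (Ip p) U)
         (X : Type) (g : forall p, F (Ip p) -> X),
    (forall p q (z : F (inter (Ip p) (Ip q))),
        g p (cmap F _ _ (inter_subl (Ip p) (Ip q)) z)
        = g q (cmap F _ _ (inter_subr (Ip p) (Ip q)) z)) ->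
    exists h : F U -> X,
      (forall p x, h (cmap F _ _ (hsub p) x) = g p x) /\
      (forall h' : F U -> X, (forall p x, h' (cmap F _ _ (hsub p) x) = g p x) ->
         forall y, h' y = h y).

Definition critical_set (F : precosheaf) (S : list R) : Prop :=
  S <> nil /\
  (forall I J (h : subI I J),
      (forall s, In s S -> (iset I s <-> iset J s)) -> bijective (cmap F I J h)) /\
  (forall I, (forall x, iset I x -> forall s, In s S -> x < s) -> F I -> False) /\
  (forall I, (forall x, iset I x -> forall s, In s S -> s < x) -> F I -> False).

Definition constructible (F : precosheaf) : Prop :=
  (forall I, finite_type (F I)) /\ exists S, critical_set F S.

(* a_{i-1} (with a_{-1} = -oo) and a_{i+1} (with a_{n+1} = +oo). *)
Definition prev_pt (a : nat -> R) (i : nat) : option R :=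
  match i with O => None | S j => Some (a j) end.
Definition next_pt (a : nat -> R) (n i : nat) : option R :=
  if Nat.ltb i n then Some (a (S i)) else None.

(* A natural transformation whose components are all bijective is a natural
   isomorphism, so it suffices to show that every [psi I] is bijective.  An
   inclusion that gains no critical point is inverted by both cosheaves, so
   [psi I] is bijective as soon as [psi J] is, for the basic interval [J]
   (a star (a_{i-1}, a_{i+1}) or a gap (a_i, a_{i+1})) containing the same
   critical points as [I]; an interval lying left of a_0 or right of a_n has
   empty stalks in [G].  An interval with several critical
   points is cut just before its last one into two overlapping pieces, each
   with fewer critical points, whose overlap has at most one; the cosheaf
   condition on the cover then propagates bijectivity by induction. *)
From Pilot Require Import Defs.
From Stdlib Require Import Reals List Arith Lra Lia Classical IndefiniteDescription.
Open Scope R_scope.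

Lemma subI_trans I J K : subI I J -> subI J K -> subI I K.
Proof. intros hIJ hJK x hx. exact (hJK x (hIJ x hx)). Qed.

Lemma iset_convex (I : Interval) x y z : iset I x -> iset I y -> x <= z <= y -> iset I z.
Proof.
  destruct I as [i [lb [ub Hi]]]; simpl. rewrite !Hi.
  unfold Defs.in_int, above, below; destruct lb, ub; intuition lra.
Qed.

Lemma bijective_empty {A B : Type} (f : A -> B) : (B -> False) -> bijective f.
Proof.
  intro HB. exists (fun y => False_rect _ (HB y)).
  split; intros; exfalso; auto.
Qed.

Lemma bijective_family_inverse {T : Type} {A B : T -> Type} (f : forall t, A t -> B t) :
  (forall t, bijective (f t)) ->
  exists g : forall t, B t -> A t,
    forall t, (forall x, g t (f t x) = x) /\ (forall y, f t (g t y) = y).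
Proof.
  intro Hf. exists (fun t => proj1_sig (constructive_indefinite_description _ (Hf t))).
  intro t. exact (proj2_sig (constructive_indefinite_description _ (Hf t))).
Qed.

Lemma cmap_inter_comm (F : precosheaf) U I J (hI : subI I U) (hJ : subI J U) z :
  cmap F _ _ hI (cmap F _ _ (inter_subl I J) z) = cmap F _ _ hJ (cmap F _ _ (inter_subr I J) z).
Proof.
  pose proof (subI_trans _ _ _ (inter_subl I J) hI) as hIJ.
  rewrite (cmap_comp F _ _ _ _ _ hIJ), (cmap_comp F _ _ _ _ _ hIJ).
  reflexivity.
Qed.

Section CosheafCover.

Variables (U : Interval) (P : Type) (Ip : P -> Interval).
Hypothesis hcov : forall x, iset U x <-> exists p, iset (Ip p) x.
Hypothesis hsub : forall p, subI (Ip p) U.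

Lemma cosheaf_ext (F : precosheaf) (hF : is_cosheaf F) (X : Type) (h1 h2 : F U -> X) :
  (forall p x, h1 (cmap F _ _ (hsub p) x) = h2 (cmap F _ _ (hsub p) x)) ->
  forall y, h1 y = h2 y.
Proof.
  intros Hagree y.
  destruct (hF U P Ip hcov hsub X (fun p x => h2 (cmap F _ _ (hsub p) x)))
    as [h [_ Huniq]].
  { intros p q z. cbv beta. rewrite cmap_inter_comm with (hJ := hsub q). reflexivity. }
  rewrite (Huniq h1 Hagree), (Huniq h2 (fun _ _ => eq_refl)). reflexivity.
Qed.

Lemma bijective_of_cover (F G : precosheaf) (psi : cmorph F G)
  (hF : is_cosheaf F) (hG : is_cosheaf G) :
  (forall p, bijective (psi (Ip p))) ->
  (forall p q, bijective (psi (inter (Ip p) (Ip q)))) -> bijective (psi U).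
Proof.
  intros Hp Hpq.
  destruct (bijective_family_inverse (fun p => psi (Ip p)) Hp) as [inv Hinv].
  destruct (hG U P Ip hcov hsub (F U) (fun p y => cmap F _ _ (hsub p) (inv p y)))
    as [h [Hh _]].
  { intros p q z. cbv beta.
    destruct (Hpq p q) as [w [_ Hw]].
    rewrite <- (Hw z), <- !comp_nat, (proj1 (Hinv p)), (proj1 (Hinv q)).
    apply cmap_inter_comm. }
  exists h. split.
  - apply (cosheaf_ext F hF (F U) (fun x => h (psi U x)) (fun x => x)).
    intros p x. rewrite comp_nat, Hh, (proj1 (Hinv p)). reflexivity.
  - apply (cosheaf_ext G hG (G U) (fun y => psi U (h y)) (fun y => y)).
    intros p y. rewrite Hh, comp_nat, (proj2 (Hinv p)). reflexivity.
Qed.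

End CosheafCover.

(* [psi I] is conjugate to [psi J] by the bijections [F[I ⊆ J]] and [G[I ⊆ J]]. *)
Lemma bijective_of_critical_sub (F G : precosheaf) (psi : cmorph F G) S
  (hFS : critical_set F S) (hGS : critical_set G S) I J (h : subI I J) :
  (forall s, In s S -> (iset I s <-> iset J s)) ->
  bijective (psi J) -> bijective (psi I).
Proof.
  intros HS [pJ [HJ1 HJ2]].
  destruct (proj1 (proj2 hFS) I J h HS) as [fi [Hf1 Hf2]].
  destruct (proj1 (proj2 hGS) I J h HS) as [gi [Hg1 Hg2]].
  exists (fun y => fi (pJ (cmap G I J h y))). split.
  - intro x. rewrite <- comp_nat, HJ1, Hf1. reflexivity.
  - intro y. set (w := fi (pJ (cmap G I J h y))).
    rewrite <- (Hg1 (psi I w)), <- comp_nat. unfold w. rewrite Hf2, HJ2, Hg1. reflexivity.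
Qed.

Lemma cmorph_iso_of_bijective (F G : precosheaf) (psi : cmorph F G) :
  (forall I, bijective (psi I)) ->
  exists phi : cmorph G F,
    (forall I x, phi I (psi I x) = x) /\ (forall I y, psi I (phi I y) = y).
Proof.
  intro Hall.
  destruct (bijective_family_inverse (fun I => psi I) Hall) as [inv Hinv].
  unshelve eexists (Build_cmorph G F inv _).
  - intros I J h y.
    rewrite <- (proj1 (Hinv J) (cmap F I J h (inv I y))), comp_nat, (proj2 (Hinv I)).
    reflexivity.
  - split; intros; apply Hinv.
Qed.

Section CriticalPoints.

Variables (F G : precosheaf) (psi : cmorph F G) (a : nat -> R) (n : nat).
Hypothesis ha : forall i j, (i < j)%nat -> (j <= n)%nat -> a i < a j.

Local Notation crit := (map a (seq 0 (S n))).

Lemma in_crit s : In s crit <-> exists k, s = a k /\ (k <= n)%nat.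
Proof.
  rewrite in_map_iff. split.
  - intros [k [<- Hk]]. apply in_seq in Hk. exists k; split; [reflexivity | lia].
  - intros [k [-> Hk]]. exists k; split; [reflexivity | apply in_seq; lia].
Qed.

Lemma crit_le i j : (i <= j)%nat -> (j <= n)%nat -> a i <= a j.
Proof.
  intros Hij Hj. destruct (Nat.eq_dec i j) as [->|]; [lra|].
  left; apply ha; lia.
Qed.

Lemma crit_lt_inv i j : (i <= n)%nat -> (j <= n)%nat -> a i < a j -> (i < j)%nat.
Proof.
  intros Hi Hj Hlt. destruct (le_lt_dec j i) as [Hji|]; [|assumption].
  pose proof (crit_le j i Hji Hi). lra.
Qed.

Lemma crit_free_position x :
  (forall k, (k <= n)%nat -> x <> a k) ->
  x < a 0%nat \/ a n < x \/ exists i, (i < n)%nat /\ a i < x < a (S i).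
Proof.
  revert ha. induction n as [|m IH]; intros ha' Hne.
  - destruct (Rtotal_order x (a 0%nat)) as [H|[H|H]]; auto.
    exfalso; exact (Hne 0%nat (le_n 0) H).
  - destruct IH as [H|[H|[i [Hi H]]]].
    + intros i j ? ?; apply ha'; lia.
    + intros k Hk; apply Hne; lia.
    + left; exact H.
    + destruct (Rtotal_order x (a (S m))) as [H'|[H'|H']].
      * right; right; exists m; split; [lia | lra].
      * exfalso; exact (Hne (S m) (le_n _) H').
      * right; left; exact H'.
    + right; right; exists i; split; [lia | exact H].
Qed.

Lemma star_crit_unique k m : (k <= n)%nat -> (m <= n)%nat ->
  iset (intv (prev_pt a k) (next_pt a n k)) (a m) -> m = k.
Proof.
  simpl; unfold Defs.in_int, above, below, prev_pt, next_pt. intros Hk Hm [Hlo Hhi].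
  destruct (lt_eq_lt_dec m k) as [[Hlt|Heq]|Hgt]; [|exact Heq|].
  - destruct k as [|j]; [lia|].
    pose proof (crit_le m j ltac:(lia) ltac:(lia)). lra.
  - destruct (Nat.ltb k n) eqn:E.
    + pose proof (crit_le (S k) m ltac:(lia) Hm). lra.
    + apply Nat.ltb_ge in E. lia.
Qed.

Lemma gap_crit_free i m : (i < n)%nat -> (m <= n)%nat -> ~ (a i < a m < a (S i)).
Proof.
  intros Hi Hm [Hlo Hhi].
  pose proof (crit_lt_inv i m ltac:(lia) Hm Hlo).
  pose proof (crit_lt_inv m (S i) Hm ltac:(lia) Hhi). lia.
Qed.

Hypothesis hFS : critical_set F crit.
Hypothesis hGS : critical_set G crit.
Hypothesis h1 : forall i, (i <= n)%nat -> bijective (psi (intv (prev_pt a i) (next_pt a n i))).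
Hypothesis h2 : forall i, (i < n)%nat -> bijective (psi (intv (Some (a i)) (Some (a (S i))))).

Lemma psi_bij_no_crit I : (forall k, (k <= n)%nat -> ~ iset I (a k)) -> bijective (psi I).
Proof.
  intro Hno.
  destruct (classic (exists x, iset I x)) as [[x Hx]|Hempty].
  2: { apply bijective_empty, (proj1 (proj2 (proj2 hGS))).
       intros y Hy. exfalso; eauto. }
  assert (Hne : forall k, (k <= n)%nat -> x <> a k).
  { intros k Hk ->. exact (Hno k Hk Hx). }
  destruct (crit_free_position x Hne) as [H|[H|[i [Hi H]]]].
  - apply bijective_empty, (proj1 (proj2 (proj2 hGS))).
    intros y Hy s Hs. apply in_crit in Hs as [m [-> Hm]].
    pose proof (crit_le 0 m ltac:(lia) Hm).
    destruct (Rlt_dec y (a 0%nat)); [lra|].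
    exfalso; apply (Hno 0%nat ltac:(lia)), (iset_convex I x y); auto; lra.
  - apply bijective_empty, (proj2 (proj2 (proj2 hGS))).
    intros y Hy s Hs. apply in_crit in Hs as [m [-> Hm]].
    pose proof (crit_le m n Hm (le_n n)).
    destruct (Rlt_dec (a n) y); [lra|].
    exfalso; apply (Hno n (le_n n)), (iset_convex I y x); auto; lra.
  - assert (Hsub : subI I (intv (Some (a i)) (Some (a (S i))))).
    { intros y Hy. simpl; unfold Defs.in_int, above, below. split.
      - destruct (Rlt_dec (a i) y); [assumption|].
        exfalso; apply (Hno i ltac:(lia)), (iset_convex I y x); auto; lra.
      - destruct (Rlt_dec y (a (S i))); [assumption|].
        exfalso; apply (Hno (S i) ltac:(lia)), (iset_convex I x y); auto; lra. }
    apply (bijective_of_critical_sub F G psi _ hFS hGS I _ Hsub); [|exact (h2 i Hi)].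
    intros s Hs. apply in_crit in Hs as [m [-> Hm]]. split; [apply Hsub|].
    intro Hin. exfalso. exact (gap_crit_free i m Hi Hm Hin).
Qed.

Lemma psi_bij_one_crit I k : (k <= n)%nat -> iset I (a k) ->
  (forall m, (m <= n)%nat -> iset I (a m) -> m = k) -> bijective (psi I).
Proof.
  intros Hk HIk Huniq.
  assert (Hsub : subI I (intv (prev_pt a k) (next_pt a n k))).
  { intros x Hx. simpl; unfold Defs.in_int, above, below, prev_pt, next_pt. split.
    - destruct k as [|j]; [exact Logic.I|].
      destruct (Rlt_dec (a j) x) as [|Hc]; [assumption|].
      pose proof (ha j (S j) ltac:(lia) Hk).
      assert (Hj : iset I (a j)) by (apply (iset_convex I x (a (S j))); auto; lra).
      pose proof (Huniq j ltac:(lia) Hj). lia.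
    - destruct (Nat.ltb k n) eqn:E; [|exact Logic.I].
      apply Nat.ltb_lt in E.
      destruct (Rlt_dec x (a (S k))) as [|Hc]; [assumption|].
      pose proof (ha k (S k) ltac:(lia) E).
      assert (Hk' : iset I (a (S k))) by (apply (iset_convex I (a k) x); auto; lra).
      pose proof (Huniq (S k) E Hk'). lia. }
  apply (bijective_of_critical_sub F G psi _ hFS hGS I _ Hsub); [|exact (h1 k Hk)].
  intros s Hs. apply in_crit in Hs as [m [-> Hm]]. split; [apply Hsub|].
  intro Hin. rewrite (star_crit_unique k m Hk Hm Hin). exact HIk.
Qed.

Lemma psi_bij_le_one_crit I :
  (forall k m, (k <= n)%nat -> (m <= n)%nat -> iset I (a k) -> iset I (a m) -> k = m) ->
  bijective (psi I).
Proof.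
  intro Huniq.
  destruct (classic (exists k, (k <= n)%nat /\ iset I (a k))) as [[k [Hk HIk]]|Hno].
  - apply (psi_bij_one_crit I k Hk HIk). intros m Hm HIm. exact (Huniq m k Hm Hk HIm HIk).
  - apply psi_bij_no_crit. intros k Hk HIk. eauto.
Qed.

Hypothesis hFc : is_cosheaf F.
Hypothesis hGc : is_cosheaf G.

(* Cover [I] by [I ∩ (-oo, a_{j+1})] and [I ∩ (a_j, +oo)]: the first has its
   critical points among [a_0 .. a_j], the second among [a_{j+1} .. a_n], where
   it has at most one; the overlap lies inside the second piece. *)
Lemma psi_bij_crit_le j I : (forall k, (k <= n)%nat -> iset I (a k) -> (k <= j)%nat) ->
  bijective (psi I).
Proof.
  induction j as [|j IHj] in I |- *; intro Hbound.
  { apply psi_bij_le_one_crit. intros k m Hk Hm HIk HIm.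
    pose proof (Hbound k Hk HIk). pose proof (Hbound m Hm HIm). lia. }
  destruct (le_lt_dec (S j) n) as [Hjn|Hjn].
  2: { apply IHj. intros k Hk HIk. pose proof (Hbound k Hk HIk). lia. }
  pose proof (ha j (S j) ltac:(lia) Hjn).
  set (A := inter I (intv None (Some (a (S j))))).
  set (B := inter I (intv (Some (a j)) None)).
  assert (HA : forall K, subI K A -> bijective (psi K)).
  { intros K HK. apply IHj. intros k Hk HKk.
    destruct (HK _ HKk) as [HIk [_ Hlt]]. simpl in Hlt.
    pose proof (crit_lt_inv k (S j) Hk Hjn Hlt). lia. }
  assert (HB : forall K, subI K B -> bijective (psi K)).
  { intros K HK. apply psi_bij_le_one_crit. intros k m Hk Hm HKk HKm.
    destruct (HK _ HKk) as [HIk [Hk' _]]. destruct (HK _ HKm) as [HIm [Hm' _]].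
    simpl in Hk', Hm'.
    pose proof (Hbound k Hk HIk). pose proof (Hbound m Hm HIm).
    pose proof (crit_lt_inv j k ltac:(lia) Hk Hk').
    pose proof (crit_lt_inv j m ltac:(lia) Hm Hm'). lia. }
  apply (bijective_of_cover I bool (fun b => if b then A else B)); auto.
  - intro x; split.
    + intro Hx. destruct (Rlt_dec x (a (S j))).
      * exists true. repeat split; simpl; auto.
      * exists false. repeat split; simpl; auto; lra.
    + intros [[|] Hx]; exact (proj1 Hx).
  - intros [|]; apply inter_subl.
  - intros [|]; [apply HA | apply HB]; intros x Hx; exact Hx.
  - intros [|] [|]; [apply HA | apply HB | apply HB | apply HB]; intros x Hx.
    + exact (proj1 Hx).
    + exact (proj2 Hx).
    + exact (proj1 Hx).
    + exact (proj1 Hx).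
Qed.

Lemma psi_bij I : bijective (psi I).
Proof. apply (psi_bij_crit_le n). auto. Qed.

End CriticalPoints.

Theorem mainTheorem5 (F G : precosheaf) (psi : cmorph F G) (a : nat -> R) (n : nat)
  (ha : forall i j, (i < j)%nat -> (j <= n)%nat -> a i < a j)
  (hFc : is_cosheaf F) (hGc : is_cosheaf G)
  (hFfin : forall I, finite_type (F I)) (hGfin : forall I, finite_type (G I))
  (hFS : critical_set F (map a (seq 0 (S n))))
  (hGS : critical_set G (map a (seq 0 (S n))))
  (h1 : forall i, (i <= n)%nat -> bijective (psi (intv (prev_pt a i) (next_pt a n i))))
  (h2 : forall i, (i < n)%nat -> bijective (psi (intv (Some (a i)) (Some (a (S i)))))) :
  exists phi : cmorph G F,
    (forall I x, phi I (psi I x) = x) /\ (forall I y, psi I (phi I y) = y).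
Proof.
  apply cmorph_iso_of_bijective. intro I.
  exact (psi_bij F G psi a n ha hFS hGS h1 h2 hFc hGc I).
Qed.
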